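(* Let $C_2\subseteq C_1\subseteq\mathbb{F}_2^n$ be linear codes with bases $\beta_2\subseteq\beta_1$, respectively, $Q=Q(C_1,C_2)$ the corresponding CSS code, $\beta_1\setminus\beta_2=\{w_1,\ldots,w_K\}$ (used as encoding), and $N=2^\ell$ ($\ell$ a positive integer). Then: (1) $(1,\ldots,1)\in T_N$ if and only if $wt\left(u+\sum_{i=1}^K v_iw_i\right)\equiv\sum_{i=1}^K v_i\, wt(w_i)\pmod N$ for all $u\in C_2$ and $v\in\mathbb{F}_2^K$; (2) $(1,\ldots,1)\in T_N$ and the logical action of $U(1,\ldots,1)$ is $U(1)^{\otimes K}$ if and only if $wt\left(u+\sum_{i=1}^K v_iw_i\right)\equiv\sum_{i=1}^K v_i\pmod N$ for all $u\in C_2$ and $v\in\mathbb{F}_2^K$; (3) $(1,\ldots,1)\in Id_N$ if and only if $C_1$ is an $N$-divisible code.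
   Context: $wt$ denotes Hamming weight; sums $u+\sum v_iw_i$ are in $\mathbb{F}_2^n$ while $\sum_i v_i wt(w_i)$ and $\sum_iv_i$ are integers. A code is $N$-divisible if $N$ divides the weight of every codeword. $\omega=e^{2\pi\mathbf{i}/N}$, $U(a)=\mathrm{diag}(1,\omega^a)$, $U(b)=\bigotimes_iU(b_i)$ for $b\in\mathbb{Z}_N^n$. $Q(C_1,C_2)$ is the subspace of $(\mathbb{C}^2)^{\otimes n}$ stabilized by all $X(u)Z(v)$, $u\in C_2$, $v\in C_1^\perp$. Logical states are $|v\rangle_L=|C_2|^{-1/2}\sum_{u\in C_2}|u+\sum_iv_iw_i\rangle$, $v\in\mathbb{F}_2^K$; the logical action of $U$ with $UQ=Q$ is $\mathcal{E}^{-1}U\mathcal{E}$ on $(\mathbb{C}^2)^{\otimes K}$, $\mathcal{E}:|v\rangle\mapsto|v\rangle_L$. $H_N=\{b\in\mathbb{Z}_N^n:U(b)Q=Q\}$; $T_N=\{b\in H_N:$ the logical action of $U(b)$ equals $\bigotimes_{i=1}^KE_i$ for some unitaries $E_i\in\mathbb{C}^{2\times2}\}$; $Id_N=\{b\in H_N:U(b)x=x\ \forall x\in Q\}$. *)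

From HB Require Import structures.
From mathcomp Require Import all_boot all_order all_algebra all_field.
Set Implicit Arguments. Unset Strict Implicit. Unset Printing Implicit Defensive.
Import Order.TTheory GRing.Theory Num.Theory.
Local Open Scope ring_scope.

Notation bvec n := 'rV['F_2]_n.

(* a state of n qubits: coefficients w.r.t. the computational basis |x>, x in F_2^n *)
Definition state (n : nat) := {ffun bvec n -> algC}.

Definition wt n (x : bvec n) : nat := #|[set i | x 0 i != 0]|.

Definition dotF2 n (u v : bvec n) : 'F_2 := \sum_(i < n) u 0 i * v 0 i.

Definition Xop n (u : bvec n) (psi : state n) : state n :=
  [ffun x : bvec n => psi (x + u)].
Definition Zop n (v : bvec n) (psi : state n) : state n :=
  [ffun x : bvec n => (if dotF2 v x == 0 then 1 else -1) * psi x].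

Definition in_dual n (C : {vspace bvec n}) (v : bvec n) : Prop :=
  forall c, c \in C -> dotF2 c v = 0.

Definition inQ n (C1 C2 : {vspace bvec n}) (psi : state n) : Prop :=
  forall u v, u \in C2 -> in_dual C1 v -> Xop u (Zop v psi) = psi.

(* omega = e^{2 pi i / N}; for N even, (N/2).-root (-1) is exactly e^{2 pi i/N}
   (the N/2-th root of -1 of minimal non-negative argument). *)
Definition omega (N : nat) : algC := (N./2).-root (-1).

(* U(b) = tensor_i diag(1, omega^{b_i}),  b in Z_N^n *)
Definition Uop N n (b : 'I_n -> 'Z_N) (psi : state n) : state n :=
  [ffun x : bvec n => (\prod_(i < n) (if x 0 i == 0 then 1 else omega N ^+ (b i : nat))) * psi x].

Definition Umat N (a : nat) : 'M[algC]_2 :=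
  \matrix_(i < 2, j < 2) (if i == j then (if i == ord0 then 1 else omega N ^+ a) else 0).

Definition ones N n : 'I_n -> 'Z_N := fun _ => 1%R.

(* encoding E : |v> |-> |v>_L = |C2|^{-1/2} sum_{u in C2} |u + sum_i v_i w_i> *)
Definition lincomb n K (w : K.-tuple (bvec n)) (v : bvec K) : bvec n :=
  \sum_(i < K) v 0 i *: tnth w i.

Definition Enc n K (C2 : {vspace bvec n}) (w : K.-tuple (bvec n)) (phi : state K)
  : state n :=
  [ffun x : bvec n => sqrtC (#|[set y : bvec n | y \in C2]|%:R)^-1 *
     \sum_(v : bvec K) (if (x - lincomb w v) \in C2 then phi v else 0)].

(* "the logical action of U (with UQ = Q) is L", i.e. E^{-1} U E = L *)
Definition logical_is n K (C2 : {vspace bvec n}) (w : K.-tuple (bvec n))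
  (U : state n -> state n) (L : state K -> state K) : Prop :=
  forall phi, U (Enc C2 w phi) = Enc C2 w (L phi).

Definition bit (a : 'F_2) : 'I_2 := if a == 0 then ord0 else ord_max.

Definition tensor K (E : 'I_K -> 'M[algC]_2) (phi : state K) : state K :=
  [ffun v : bvec K => \sum_(v' : bvec K)
       (\prod_(i < K) E i (bit (v 0 i)) (bit (v' 0 i))) * phi v'].

Definition unitary (E : 'M[algC]_2) : Prop := E *m (map_mx (@Num.conj algC) E)^T = 1%:M.

Definition inH N n (C1 C2 : {vspace bvec n}) (b : 'I_n -> 'Z_N) : Prop :=
  (forall psi, inQ C1 C2 psi -> inQ C1 C2 (Uop b psi)) /\
  (forall phi, inQ C1 C2 phi -> exists psi, inQ C1 C2 psi /\ Uop b psi = phi).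

Definition inT N n K (C1 C2 : {vspace bvec n}) (w : K.-tuple (bvec n))
  (b : 'I_n -> 'Z_N) : Prop :=
  inH C1 C2 b /\
  exists E : 'I_K -> 'M[algC]_2,
    (forall i, unitary (E i)) /\ logical_is C2 w (Uop b) (tensor E).

Definition inId N n (C1 C2 : {vspace bvec n}) (b : 'I_n -> 'Z_N) : Prop :=
  inH C1 C2 b /\ (forall psi, inQ C1 C2 psi -> Uop b psi = psi).

Definition divisible_code n (N : nat) (C : {vspace bvec n}) : Prop :=
  forall c, c \in C -> (N %| wt c)%N.

From HB Require Import structures.
From mathcomp Require Import all_boot all_order all_algebra all_field.
Import Order.TTheory GRing.Theory Num.Theory.
Local Open Scope ring_scope.
Set Implicit Arguments. Unset Strict Implicit.

(* U(1,...,1) multiplies |x> by ω^(wt x), and ω is a primitive N-th root of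
   unity, so two such phases agree iff the weights agree mod N.  The states of Q
   are the functions supported on C1 and constant on the cosets of C2 (a vector
   outside C1 is separated from C1 by a dual vector).  Hence U preserves Q as
   soon as wt is constant mod N on C2-cosets in C1, acts trivially on Q iff N
   divides every weight of C1, and multiplies the summand |u + Σ v_i w_i> of
   |v>_L by ω^(wt(u + Σ v_i w_i)).  A logical action E_1 ⊗ ... ⊗ E_K forces this
   phase to be independent of u and a product over the bits of v equal to 1 at
   v = 0, hence equal to ∏_{v_i = 1} ω^(wt w_i); conversely the diagonal gates
   U(wt w_i), resp. U(1), realise it whenever the weight congruence holds. *)

Lemma F2_cases (a : 'F_2) : a = 0 \/ a = 1.
Proof. by case: a => [[|[|//]]] /= ?; [left|right]; apply: val_inj. Qed.

Section PrimitiveRoot.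
Variable l : nat.
Hypothesis l_gt0 : (0 < l)%N.
Local Notation N := (2 ^ l)%N.

Lemma omega_half : omega N ^+ (2 ^ l.-1) = -1.
Proof.
have half_N : (N./2 = 2 ^ l.-1)%N by rewrite -(prednK l_gt0) expnS mul2n doubleK.
by rewrite /omega half_N rootCK // expn_gt0.
Qed.

Lemma omega_prim : N.-primitive_root (omega N).
Proof.
have omegaN : omega N ^+ N = 1.
  by rewrite -{2}(prednK l_gt0) expnS mulnC exprM omega_half expr2 mulrNN mulr1.
have [m m_prim m_dvd] := prim_order_exists (expn_gt0 2 l) omegaN.
have [j j_le m_def] := elimT (@dvdn_pfactor 2 m l isT) m_dvd.
have [j_l|j_l] := eqVneq j l; first by rewrite m_def j_l in m_prim.
have : (2 ^ j %| 2 ^ l.-1)%N.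
  by apply: dvdn_exp2l; rewrite -ltnS prednK // ltn_neqAle j_l.
rewrite -m_def (prim_order_dvd m_prim) omega_half -subr_eq0 -opprD oppr_eq0.
by rewrite (pnatr_eq0 _ 2).
Qed.

Lemma omega_expr_eq a b : omega N ^+ a = omega N ^+ b <-> a = b %[mod N].
Proof.
have eq_mod := eq_prim_root_expr omega_prim a b.
by split=> /eqP; [rewrite eq_mod | rewrite -eq_mod] => /eqP.
Qed.

Lemma omega_neq0 : omega N != 0.
Proof. by rewrite (prim_root_eq0 omega_prim) expn_eq0. Qed.

Lemma norm_omega : `|omega N| = 1.
Proof.
have : `|omega N| ^+ N = 1 by rewrite -normrX prim_expr_order ?omega_prim ?normr1.
by move/eqP; rewrite pexpr_eq1 ?expn_gt0 // => /eqP.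
Qed.

Lemma Uop_onesE n (psi : state n) x : Uop (@ones N n) psi x = omega N ^+ wt x * psi x.
Proof.
rewrite /Uop ffunE /ones /= modn_small ?ltn_exp2l //; congr (_ * _).
rewrite /wt (eq_bigr (fun i => if x 0 i != 0 then omega N else 1)); last first.
  by move=> i _; case: eqP.
by rewrite -big_mkcond /= prodr_const cardsE.
Qed.

End PrimitiveRoot.

Lemma wt0 n : wt (0 : bvec n) = 0%N.
Proof. by apply/eqP; rewrite cards_eq0; apply/eqP/setP => i; rewrite !inE mxE eqxx. Qed.

Lemma dotF2C n (u v : bvec n) : dotF2 u v = dotF2 v u.
Proof. by apply: eq_bigr => i _; rewrite mulrC. Qed.

Lemma dotF2_0r n (x : bvec n) : dotF2 x 0 = 0.
Proof. by apply: big1 => i _; rewrite mxE mulr0. Qed.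

Lemma dotF2_col n m (x : bvec n) (M : 'M_(n, m)) j :
  dotF2 x (\row_i M i j) = (x *m M) 0 j.
Proof. by rewrite mxE; apply: eq_bigr => i _; rewrite mxE. Qed.

Lemma memv_vbasis_mx (F : fieldType) n (C : {vspace 'rV[F]_n}) x :
  (x \in C) = (x <= \matrix_i tnth (vbasis C) i)%MS.
Proof.
apply/idP/submxP => [x_C | [D ->]].
  exists (\row_i coord (vbasis C) i x); rewrite mulmx_sum_row {1}(coord_vbasis x_C).
  by apply: eq_bigr => i _; rewrite rowK mxE (tnth_nth 0).
rewrite mulmx_sum_row; apply: memv_suml => i _; apply: memvZ.
by rewrite rowK; apply/vbasis_mem/mem_tnth.
Qed.

(* The columns of the cokernel of a basis matrix of C1 lie in the dual of C1,
   and x is not orthogonal to all of them. *)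
Lemma dual_separation n (C1 : {vspace bvec n}) x :
  x \notin C1 -> exists2 v, in_dual C1 v & dotF2 v x != 0.
Proof.
rewrite memv_vbasis_mx submxE; set A := \matrix_i _ => /eqP xA_neq0.
have [j xAj] : exists j, (x *m cokermx A) 0 j != 0.
  apply/existsP; apply: contra_notT xA_neq0 => /existsPn xA0.
  by apply/rowP => j; rewrite [RHS]mxE; apply/eqP/negPn/xA0.
exists (\row_i cokermx A i j); last by rewrite dotF2C dotF2_col.
by move=> c; rewrite memv_vbasis_mx submxE dotF2_col => /eqP ->; rewrite mxE.
Qed.

Section CSSCode.
Variables (n : nat) (C1 C2 : {vspace bvec n}).
Hypothesis C2C1 : (C2 <= C1)%VS.

Lemma inQ_supp psi : inQ C1 C2 psi -> forall x, x \notin C1 -> psi x = 0.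
Proof.
move=> psi_Q x /dual_separation[v v_dual vx_neq0].
move/ffunP/(_ x): (psi_Q 0 v (mem0v _) v_dual).
rewrite !ffunE addr0 (negbTE vx_neq0) mulN1r => /eqP.
by rewrite eqNr => /eqP.
Qed.

Lemma inQ_periodic psi : inQ C1 C2 psi -> forall x u, u \in C2 -> psi (x + u) = psi x.
Proof.
move=> psi_Q x u u_C2; have dual0 : in_dual C1 0 by move=> c _; exact: dotF2_0r.
move/ffunP/(_ x): (psi_Q u 0 u_C2 dual0).
by rewrite !ffunE dotF2C dotF2_0r eqxx mul1r.
Qed.

Lemma inQ_intro (psi : state n) : (forall x, x \notin C1 -> psi x = 0) ->
  (forall x u, u \in C2 -> psi (x + u) = psi x) -> inQ C1 C2 psi.
Proof.
move=> psi_supp psi_per u v u_C2 v_dual; apply/ffunP => x; rewrite !ffunE.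
have [xu_C1 | xu_C1] := boolP (x + u \in C1).
  by rewrite dotF2C v_dual // eqxx mul1r psi_per.
have x_C1 : x \notin C1 by apply: contra xu_C1 => /memvD; apply; apply: (subvP C2C1).
by rewrite psi_supp // psi_supp // mulr0.
Qed.

Lemma inQ_mul (g : bvec n -> algC) (psi : state n) :
  (forall x u, x \in C1 -> u \in C2 -> g (x + u) = g x) ->
  inQ C1 C2 psi -> inQ C1 C2 [ffun x => g x * psi x].
Proof.
move=> g_per psi_Q; apply: inQ_intro => [x x_C1 | x u u_C2]; rewrite !ffunE.
  by rewrite (inQ_supp psi_Q x_C1) mulr0.
rewrite (inQ_periodic psi_Q _ u_C2).
have [x_C1 | x_C1] := boolP (x \in C1); first by rewrite g_per.
by rewrite (inQ_supp psi_Q x_C1) !mulr0.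
Qed.

Variables (l : nat) (l_gt0 : (0 < l)%N).
Local Notation N := (2 ^ l)%N.

Lemma inH_ones : (forall x u, x \in C1 -> u \in C2 -> wt (x + u) = wt x %[mod N]) ->
  inH C1 C2 (@ones N n).
Proof.
move=> wt_per; have phase_per x u : x \in C1 -> u \in C2 ->
    omega N ^+ wt (x + u) = omega N ^+ wt x.
  by move=> x_C1 u_C2; apply/omega_expr_eq/wt_per.
have UopE psi : Uop (@ones N n) psi = [ffun x => omega N ^+ wt x * psi x].
  by apply/ffunP => x; rewrite Uop_onesE // ffunE.
split=> [psi psi_Q | phi phi_Q]; first by rewrite UopE; exact: inQ_mul.
exists [ffun x => (omega N ^+ wt x)^-1 * phi x]; split.
  by apply: inQ_mul phi_Q => x u x_C1 u_C2; rewrite phase_per.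
apply/ffunP => x; rewrite Uop_onesE // ffunE mulrA divff ?mul1r //.
by rewrite expf_neq0 // omega_neq0.
Qed.

Lemma inId_onesP : inId C1 C2 (@ones N n) <-> divisible_code N C1.
Proof.
have phase1 (y : bvec n) : (N %| wt y)%N = (omega N ^+ wt y == 1).
  by rewrite -(expr0 (omega N)) (eq_prim_root_expr (omega_prim l_gt0)) mod0n.
split=> [[_ U_id] c c_C1 | N_div].
  pose coset : state n := [ffun x => (x - c \in C2)%:R].
  have coset_Q : inQ C1 C2 coset.
    apply: inQ_intro => [x | x u u_C2]; rewrite !ffunE; last by rewrite addrAC rpredDr.
    apply: contraNeq; rewrite pnatr_eq0 eqb0 negbK => xc_C2.
    by rewrite -(subrK c x) memvD // (subvP C2C1).
  move/ffunP/(_ c): (U_id coset coset_Q).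
  by rewrite Uop_onesE // ffunE subrr mem0v mulr1 phase1 => ->.
split.
  apply: inH_ones => x u x_C1 u_C2.
  by rewrite !(eqP (N_div _ _)) // memvD // (subvP C2C1).
move=> psi psi_Q; apply/ffunP => x; rewrite Uop_onesE //.
have [x_C1 | x_C1] := boolP (x \in C1); last by rewrite (inQ_supp psi_Q x_C1) mulr0.
by move: (N_div x x_C1); rewrite phase1 => /eqP ->; rewrite mul1r.
Qed.

End CSSCode.

Lemma delta_mx_row_neq0 K (i j : 'I_K) : ((delta_mx 0 i : bvec K) 0 j != 0) = (j == i).
Proof. by rewrite mxE eqxx; case: (j == i); rewrite ?oner_eq0. Qed.

Lemma prod_coord_supp K (d : 'I_K -> 'F_2 -> algC) (f : bvec K -> algC) :
  (forall v, f v = \prod_i d i (v 0 i)) -> f 0 = 1 ->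
  forall v, f v = \prod_(i | v 0 i != 0) f (delta_mx 0 i).
Proof.
move=> fE f0; have d0 : \prod_i d i 0 = 1.
  by rewrite -[in RHS]f0 fE; apply: eq_bigr => i _; rewrite mxE.
have d0_neq0 i : d i 0 != 0.
  apply/eqP => di0; move: d0; rewrite (bigD1 i) //= di0 mul0r => /eqP.
  by rewrite eq_sym oner_eq0.
pose r i := d i 1 / d i 0.
have ratioE u : f u = \prod_(i | u 0 i != 0) r i.
  rewrite fE [RHS]big_mkcond -[RHS]mul1r -[X in X * _]d0 -big_split.
  apply: eq_bigr => i _ /=.
  by case: (F2_cases (u 0 i)) => ->; rewrite /= ?mulr1 // mulrC divfK.
move=> v; rewrite ratioE; apply: eq_bigr => i _.
by rewrite ratioE (big_pred1 i) // => j; rewrite delta_mx_row_neq0.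
Qed.

Lemma bit_inj : injective bit.
Proof. by move=> a b; rewrite /bit; case: (F2_cases a) => ->; case: (F2_cases b) => ->. Qed.

Lemma tensor_diag K (E : 'I_K -> 'M[algC]_2) phi v :
  (forall i a b, a != b -> E i a b = 0) ->
  tensor E phi v = (\prod_i E i (bit (v 0 i)) (bit (v 0 i))) * phi v.
Proof.
move=> E_diag; rewrite /tensor ffunE (bigD1 v) //= [X in _ + X]big1 ?addr0 // => v' v'_v.
have [i v_i] : exists i, v 0 i != v' 0 i.
  apply/existsP; move: v'_v; apply: contraNT => /existsPn v_v'.
  by apply/eqP/rowP => i; apply/esym/eqP/negPn.
by rewrite (bigD1 i) //= E_diag ?mul0r //; apply: contra v_i => /eqP/bit_inj ->.
Qed.

Lemma Umat_offdiag N a i j : i != j -> Umat N a i j = 0.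
Proof. by move=> i_j; rewrite mxE (negbTE i_j). Qed.

Lemma prod_Umat_bit N K (a : 'I_K -> nat) (v : bvec K) :
  \prod_i Umat N (a i) (bit (v 0 i)) (bit (v 0 i)) =
  omega N ^+ (\sum_(i < K) (if v ord0 i == 0%R then 0 else a i))%N.
Proof. by rewrite -prodrXr; apply: eq_bigr => i _; rewrite mxE eqxx /bit; case: (v 0 i == 0). Qed.

Lemma Umat_unitary l a : (0 < l)%N -> unitary (Umat (2 ^ l) a).
Proof.
move=> l_gt0; apply/matrixP => i j; rewrite !mxE big_ord_recl big_ord1 !mxE.
have unit_phase : omega (2 ^ l) ^+ a * (omega (2 ^ l) ^+ a)^* = 1.
  by rewrite -normCK normrX norm_omega // !expr1n.
case: i => [[|[|//]]] ?; case: j => [[|[|//]]] ? /=;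
  by rewrite ?mxE /= ?conjC0 ?conjC1 ?mulr0 ?mul0r ?mulr1 ?addr0 ?add0r.
Qed.

Section Encoding.
Variables (n K : nat) (C1 C2 : {vspace bvec n}).
Variables (b2 : seq (bvec n)) (w : K.-tuple (bvec n)).
Hypotheses (b2_basis : basis_of C2 b2) (b2w_basis : basis_of C1 (b2 ++ w)).

Lemma span_b2 : <<b2>>%VS = C2.
Proof. by case/andP: b2_basis => /eqP. Qed.

Lemma C1_sum : (C2 + <<w>>)%VS = C1.
Proof. by case/andP: b2w_basis => /eqP <- _; rewrite span_cat span_b2. Qed.

Lemma C2_sub_C1 : (C2 <= C1)%VS.
Proof. by rewrite -C1_sum addvSl. Qed.

Lemma lincomb_span v : lincomb w v \in <<w>>%VS.
Proof. by apply: memv_suml => i _; apply/memvZ/memv_span/mem_tnth. Qed.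

Lemma lincombB v v' : lincomb w (v - v') = lincomb w v - lincomb w v'.
Proof. by rewrite /lincomb -sumrB; apply: eq_bigr => i _; rewrite !mxE scalerBl. Qed.

Lemma lincomb0 : lincomb w 0 = 0.
Proof. by apply: big1 => i _; rewrite mxE scale0r. Qed.

Lemma lincomb_delta j : lincomb w (delta_mx 0 j) = tnth w j.
Proof.
rewrite /lincomb (bigD1 j) //= big1 => [|i i_j]; rewrite mxE eqxx /=.
  by rewrite eqxx scale1r addr0.
by rewrite (negbTE i_j) scale0r.
Qed.

Lemma lincomb_C2_eq0 v : lincomb w v \in C2 -> v = 0.
Proof.
move=> v_C2; case/andP: b2w_basis => _.
rewrite cat_free => /and3P[_ w_free /directv_addP b2w_direct].
have : lincomb w v \in (<<b2>> :&: <<w>>)%VS by rewrite memv_cap span_b2 v_C2 lincomb_span.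
rewrite b2w_direct memv0 => /eqP v0; apply/rowP => i; rewrite mxE.
apply: (freeP w_free (fun i => v 0 i)); rewrite -[RHS]v0.
by apply: eq_bigr => j _; rewrite (tnth_nth 0).
Qed.

Lemma C1_decomp x : x \in C1 -> exists u v, u \in C2 /\ x = u + lincomb w v.
Proof.
rewrite -C1_sum => /memv_addP[u u_C2 [z z_w ->]].
exists u, (\row_i coord w i z); split => //; congr (_ + _).
rewrite {1}(coord_span z_w); apply: eq_bigr => i _.
by rewrite mxE (tnth_nth 0).
Qed.

Let enc_norm : algC := sqrtC (#|[set y : bvec n | y \in C2]|%:R)^-1.

Lemma enc_norm_neq0 : enc_norm != 0.
Proof.
rewrite sqrtC_eq0 invr_eq0 pnatr_eq0 -lt0n; apply/card_gt0P.
by exists 0; rewrite inE mem0v.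
Qed.

(* The coset u + C2 meets the encoded vectors lincomb w v' only for v' = v. *)
Lemma Enc_coset (phi : state K) u v :
  u \in C2 -> Enc C2 w phi (u + lincomb w v) = enc_norm * phi v.
Proof.
move=> u_C2; rewrite ffunE (bigD1 v) //= addrK u_C2 [X in _ + X]big1 ?addr0 // => v' v'_v.
case: ifP => // uvv'_C2; case/eqP: v'_v; apply/esym/eqP; rewrite -subr_eq0.
apply/eqP/lincomb_C2_eq0; rewrite lincombB.
by rewrite -[X in X - _](addKr u) -addrA rpredD // rpredN.
Qed.

Variables (l : nat) (l_gt0 : (0 < l)%N).
Local Notation N := (2 ^ l)%N.

Lemma logical_ones_phase (E : 'I_K -> 'M[algC]_2) :
  logical_is C2 w (Uop (@ones N n)) (tensor E) ->
  forall u v, u \in C2 ->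
    omega N ^+ wt (u + lincomb w v) = \prod_i E i (bit (v 0 i)) (bit (v 0 i)).
Proof.
move=> E_logical u v u_C2; pose ket_v : state K := [ffun v' => (v' == v)%:R].
have ket_vE v' : ket_v v' = (v' == v)%:R by rewrite ffunE.
clearbody ket_v.
move/ffunP/(_ (u + lincomb w v)): (E_logical ket_v).
rewrite Uop_onesE // !Enc_coset // ket_vE eqxx mulr1 mulrC.
rewrite /tensor ffunE (bigD1 v) //= [\sum_(v' | v' != v) _]big1 => [|v' v'_v]; last first.
  by rewrite ket_vE (negbTE v'_v) mulr0.
by rewrite ket_vE eqxx mulr1 addr0 => /(mulfI enc_norm_neq0).
Qed.

Lemma logical_ones_diag (E : 'I_K -> 'M[algC]_2) :
  (forall i a b, a != b -> E i a b = 0) ->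
  (forall u v, u \in C2 ->
    omega N ^+ wt (u + lincomb w v) = \prod_i E i (bit (v 0 i)) (bit (v 0 i))) ->
  logical_is C2 w (Uop (@ones N n)) (tensor E).
Proof.
move=> E_diag phase phi; apply/ffunP => x; rewrite Uop_onesE // !ffunE mulrCA.
congr (_ * _); rewrite mulr_sumr; apply: eq_bigr => v _.
case: ifP => [xv_C2|_]; last by rewrite mulr0.
by rewrite tensor_diag // -{1}(subrK (lincomb w v) x) phase.
Qed.

Lemma logical_ones_UmatP (a : 'I_K -> nat) :
  logical_is C2 w (Uop (@ones N n)) (tensor (fun i => Umat N (a i))) <->
  (forall u (v : bvec K), u \in C2 ->
     wt (u + lincomb w v) = (\sum_(i < K) (if v ord0 i == 0%R then 0 else a i))%N %[mod N]).
Proof.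
split=> [U_logical u v u_C2 | wt_cond].
  by apply/(omega_expr_eq l_gt0); rewrite (logical_ones_phase U_logical) // prod_Umat_bit.
apply: logical_ones_diag => [i a' b' /Umat_offdiag // | u v u_C2].
by rewrite prod_Umat_bit; apply/(omega_expr_eq l_gt0)/wt_cond.
Qed.

Lemma logical_ones_weights (E : 'I_K -> 'M[algC]_2) :
  logical_is C2 w (Uop (@ones N n)) (tensor E) ->
  forall u (v : bvec K), u \in C2 ->
    wt (u + lincomb w v) =
      (\sum_(i < K) (if v ord0 i == 0%R then 0 else wt (tnth w i)))%N %[mod N].
Proof.
move=> E_logical u v u_C2; apply/(omega_expr_eq l_gt0).
have phase := logical_ones_phase E_logical.
pose f v := omega N ^+ wt (lincomb w v).
have f_prod v' : f v' = \prod_i E i (bit (v' 0 i)) (bit (v' 0 i)).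
  by rewrite /f -[lincomb w v']add0r phase ?mem0v.
have f0 : f 0 = 1 by rewrite /f lincomb0 wt0.
have := prod_coord_supp (d := fun i a => E i (bit a) (bit a)) f_prod f0.
rewrite -prodrXr phase // -f_prod => ->; rewrite big_mkcond.
by apply: eq_bigr => i _; rewrite /f lincomb_delta; case: (v 0 i == 0).
Qed.

Lemma inH_ones_of_weights (f : bvec K -> nat) :
  (forall u v, u \in C2 -> wt (u + lincomb w v) = f v %[mod N]) ->
  inH C1 C2 (@ones N n).
Proof.
move=> wt_cond; apply: (inH_ones C2_sub_C1 l_gt0) => x u' x_C1 u'_C2.
have [u [v [u_C2 ->]]] := C1_decomp x_C1.
by rewrite addrAC !wt_cond ?rpredD.
Qed.

End Encoding.

Theorem corollary3p17 (n K l : nat) (C1 C2 : {vspace bvec n})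
  (b2 : seq (bvec n)) (w : K.-tuple (bvec n))
  (hb2 : basis_of C2 b2) (hb1 : basis_of C1 (b2 ++ w)) (hl : (0 < l)%N) :
  let N := (2 ^ l)%N in
  [/\ inT C1 C2 w (@ones N n) <->
        (forall u (v : bvec K), u \in C2 ->
           wt (u + lincomb w v) = (\sum_(i < K) (if v ord0 i == 0%R then 0 else wt (tnth w i)))%N
             %[mod N]),
      (inT C1 C2 w (@ones N n) /\
         logical_is C2 w (Uop (@ones N n)) (tensor (fun _ : 'I_K => Umat N 1))) <->
        (forall u (v : bvec K), u \in C2 ->
           wt (u + lincomb w v) = (\sum_(i < K) (if v ord0 i == 0%R then 0 else 1))%N
             %[mod N])
    & inId C1 C2 (@ones N n) <-> divisible_code N C1].
Proof.
move=> N; have Umat_logicalP := logical_ones_UmatP hb2 hb1 hl.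
split; last exact (inId_onesP (C2_sub_C1 hb2 hb1) hl).
- split=> [[_ [E [_ E_logical]]] | wt_cond].
    exact: (logical_ones_weights hb2 hb1 hl E_logical).
  split; first exact: (inH_ones_of_weights hb2 hb1 hl wt_cond).
  exists (fun i => Umat N (wt (tnth w i))); split; first by move=> i; exact: Umat_unitary.
  exact/Umat_logicalP.
- split=> [[_ /Umat_logicalP] // | wt_cond].
  have U_logical := proj2 (Umat_logicalP (fun=> 1%N)) wt_cond.
  split=> //; split; first exact: (inH_ones_of_weights hb2 hb1 hl wt_cond).
  by exists (fun=> Umat N 1); split=> // i; exact: Umat_unitary.
Qed.
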